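(* In the setting of the context, the fidelity between the original ciphertext and the anamorphic ciphertext satisfies \[ F\big(M_f^{(0)},M_f^{(1)}\big)\;\ge\;1-\frac1\eta . \]
   Context: Let $d_1\ge d_2\ge1$, $\mathcal H_M=(\mathbb C^2)^{\otimes d_1}$, $\mathcal H_{M_c}=(\mathbb C^2)^{\otimes d_2}$, and $U_k=\bigotimes_{j}X^{k_{2j-1}}Z^{k_{2j}}$ (Pauli $X,Z$) for bit strings $k$. $M_o$ is a strictly positive definite density matrix on $\mathcal H_M$, $M_c$ a density matrix on $\mathcal H_{M_c}$; $M_o'=U_kM_oU_k^\dagger$ ($k\in\{0,1\}^{2d_1}$), $M_c'=U_{k'}M_cU_{k'}^\dagger$ ($k'\in\{0,1\}^{2d_2}$), $V|\psi\rangle=|\psi\rangle\otimes|0\rangle^{\otimes(d_1-d_2)}$, $M_c''=VM_c'V^\dagger$. For $\eta\in\mathbb Z^+$, on $\mathbb C^2\otimes\mathcal H_M$ (blocks w.r.t. the first qubit), $M_a^{(0)}=\begin{pmatrix}\frac12M_o'&0\\0&\frac12M_o'\end{pmatrix}$, $M_a^{(1)}=\begin{pmatrix}\frac12M_o'&\frac1\eta M_c''\\\frac1\eta(M_c'')^\dagger&\frac12M_o'\end{pmatrix}$, $M_f^{(b)}=U_\sigma M_a^{(b)}U_\sigma^\dagger$ with $U_\sigma$ a permutation matrix. Standing assumption: for a threshold $\varepsilon>0$, $1/\eta<\varepsilon$ and $\frac1{\eta^2}\|M_c''(M_o')^{-1}M_c''\|\le\frac14\lambda_{\min}(M_o')$.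 Fidelity: $F(\rho,\tau)=\operatorname{Tr}\sqrt{\sqrt\rho\,\tau\sqrt\rho}$. *)

(* Complex scalars: an arbitrary numClosedFieldType C
   (e.g. complex R for R : realType, or algC). *)
From mathcomp Require Import all_boot all_order all_algebra.
From mathcomp Require Import fingroup perm mxtens.
From Stdlib Require Import ClassicalEpsilon.
Set Implicit Arguments. Unset Strict Implicit. Unset Printing Implicit Defensive.
Import Order.TTheory GRing.Theory Num.Theory.
Local Open Scope ring_scope.

Section Defs.
Variable C : numClosedFieldType.

Definition adjmx {m n} (A : 'M[C]_(m, n)) : 'M[C]_(n, m) :=
  (map_mx (fun x => x^*) A)^T.

Definition psd {n} (A : 'M[C]_n) : Prop :=
  forall v : 'cV[C]_n, 0 <= (adjmx v *m A *m v) 0 0.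

Definition posdef {n} (A : 'M[C]_n) : Prop :=
  forall v : 'cV[C]_n, v != 0 -> 0 < (adjmx v *m A *m v) 0 0.

Definition density {n} (A : 'M[C]_n) : Prop := psd A /\ \tr A = 1.

(* the (unique) positive semidefinite square root; 0 if none exists *)
Definition sqrtm {n} (A : 'M[C]_n) : 'M[C]_n :=
  epsilon (inhabits 0) (fun S : 'M[C]_n => psd S /\ S *m S = A).

Definition fidelity {n} (rho tau : 'M[C]_n) : C :=
  \tr (sqrtm (sqrtm rho *m tau *m sqrtm rho)).

(* smallest / largest eigenvalue (w.r.t. the order of C); 0 by default *)
Definition lambda_min {n} (A : 'M[C]_n) : C :=
  epsilon (inhabits 0) (fun l : C => eigenvalue A l /\
                          forall b, eigenvalue A b -> l <= b).
Definition lambda_max {n} (A : 'M[C]_n) : C :=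
  epsilon (inhabits 0) (fun l : C => eigenvalue A l /\
                          forall b, eigenvalue A b -> b <= l).

Definition opnorm {m n} (A : 'M[C]_(m, n)) : C :=
  sqrtC (lambda_max (adjmx A *m A)).

Definition pauliX : 'M[C]_2 := \matrix_(i, j) (if i == j then 0 else 1).
Definition pauliZ : 'M[C]_2 :=
  \matrix_(i, j) (if i == j then (if val i == 0%N then 1 else -1) else 0).

Definition pauli1 (ab : bool * bool) : 'M[C]_2 :=
  (if ab.1 then pauliX else 1%:M) *m (if ab.2 then pauliZ else 1%:M).

(* tensor product of single-qubit factors, first pair = first qubit *)
Fixpoint pauli_seq (s : seq (bool * bool)) : 'M[C]_(2 ^ size s) :=
  match s return 'M[C]_(2 ^ size s) with
  | [::] => 1%:M
  | p :: s' => castmx (esym (expnS 2 (size s')), esym (expnS 2 (size s')))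
                 (tensmx (pauli1 p) (pauli_seq s'))
  end.

(* U_k for k in {0,1}^{2d}, given as the d pairs (k_{2j-1}, k_{2j}) *)
Definition pauliU {d} (k : d.-tuple (bool * bool)) : 'M[C]_(2 ^ d) :=
  castmx (congr1 (expn 2) (size_tuple k), congr1 (expn 2) (size_tuple k))
    (pauli_seq k).

Definition conjmx {m n} (U : 'M[C]_(m, n)) (A : 'M[C]_n) : 'M[C]_m :=
  U *m A *m adjmx U.

Definition ket0 (m : nat) : 'cV[C]_(2 ^ m) :=
  \col_i (if val i == 0%N then 1 else 0).

Lemma Vdim_proof (d1 d2 : nat) : (d2 <= d1)%N -> (2 ^ d2 * 2 ^ (d1 - d2) = 2 ^ d1)%N.
Proof. by move=> h; rewrite -expnD subnKC. Qed.

Definition Vmx (d1 d2 : nat) (h : (d2 <= d1)%N) : 'M[C]_(2 ^ d1, 2 ^ d2) :=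
  castmx (Vdim_proof h, muln1 (2 ^ d2)%N)
    (tensmx (1%:M : 'M[C]_(2 ^ d2)) (ket0 (d1 - d2))).

(* M_a^{(0)} and M_a^{(1)} on C^2 (x) H_M, blocks w.r.t. the first qubit *)
Definition Ma0 {n} (Mo' : 'M[C]_n) : 'M[C]_(n + n) :=
  block_mx (2^-1 *: Mo') 0 0 (2^-1 *: Mo').
Definition Ma1 {n} (eta : nat) (Mo' Mc'' : 'M[C]_n) : 'M[C]_(n + n) :=
  block_mx (2^-1 *: Mo') (eta%:R^-1 *: Mc'')
           (eta%:R^-1 *: adjmx Mc'') (2^-1 *: Mo').

End Defs.

(* Write A = M_o'/2 and B = M_c''/eta, so that up to the permutation P the two
   ciphertexts are rho = diag(A, A) and sigma = [[A, B], [B, A]].  Whenever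
   W^* rho W <= sigma, the matrix M = sqrt(rho) W sqrt(rho) satisfies
   M^* M <= sqrt(rho) sigma sqrt(rho), hence F(rho, sigma) >= Tr M = Tr (rho W).
   With W = 1 - rho^-1 G and G = [[B, -B], [-B, B]]/2 one gets Tr (rho W) = 1 - 1/eta
   and sigma - W^* rho W = [[B - K/2, K/2], [K/2, B - K/2]] for K = B A^-1 B; this
   is positive because B and B - K are.  The hypothesis on the operator norm says K <= A,
   and two Cauchy-Schwarz inequalities turn this into K <= B.
   The library's [conjmx V] multiplies by [pinvmx V] on the right; for the
   isometries used here that pseudo-inverse is the adjoint. *)

From mathcomp Require Import all_boot all_order all_algebra.
From mathcomp Require Import fingroup perm mxtens spectral.
From mathcomp Require Import ring.
From Stdlib Require Import ClassicalEpsilon.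
Set Implicit Arguments. Unset Strict Implicit. Unset Printing Implicit Defensive.
Import Order.TTheory GRing.Theory Num.Theory.
Local Open Scope ring_scope.

Section PartialMonomial.
Variable F : fieldType.

Definition partial_monomial m n (A : 'M[F]_(m, n)) :=
  forall i j i' j', A i j != 0 -> A i' j' != 0 -> (i == i') = (j == j').

(* Every pivot of the elimination is the unique nonzero entry of its row and
   column, so the elimination only ever swaps rows. *)
Lemma col_ebase_partial_monomial m n (A : 'M[F]_(m, n)) :
  partial_monomial A -> exists s, col_ebase A = perm_mx s.
Proof.
rewrite /col_ebase unlock.
elim: m n A => [|m IH] [|n] A hA /=; try by exists 1%g; rewrite perm_mx1.
case: pickP => [[i j] /= hij|_]; last by exists 1%g; rewrite perm_mx1.
have hv : dlsubmx (xrow i 0 (xcol j 0 A)) = 0.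
  apply/matrixP => k l; rewrite !mxE [l]ord1.
  have -> : lshift n (0 : 'I_1) = 0 :> 'I_(1 + n) by apply: val_inj.
  rewrite tpermR; apply/eqP; apply: contraT => hk.
  have /eqP hk' := hA _ _ _ _ hk hij; rewrite eqxx in hk'.
  have : tperm i 0 (rshift 1 k) = tperm i 0 0 by rewrite hk' tpermR.
  by move/perm_inj/(congr1 val).
have hA' : partial_monomial (drsubmx (xrow i 0 (xcol j 0 A))).
  move=> k l k' l'; rewrite !mxE => h1 h2.
  have eq_rshift p (a b : 'I_p) : (rshift 1 a == rshift 1 b) = (a == b).
    by rewrite -val_eqE /= eqn_add2l val_eqE.
  by have := hA _ _ _ _ h1 h2; rewrite !(inj_eq perm_inj) !eq_rshift.
rewrite hv scaler0 mul0mx subr0; have [s' hs'] := IH _ _ hA'.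
case E: (Gaussian_elimination_ _) => [[L U] r] /=; rewrite E /= in hs'.
exists (tperm i 0 * lift0_perm s')%g.
have -> : block_mx 1 0 0 L = lift0_mx L :> 'M[F]_(1 + m) by [].
by rewrite hs' lift0_mx_perm xrowE /tperm_mx -perm_mxM.
Qed.

Lemma partial_monomial1 n : partial_monomial (1%:M : 'M[F]_n).
Proof.
move=> i j i' j'; rewrite !mxE !mulrb.
by case: (i =P j) => [<- | _]; case: (i' =P j') => [<- | _]; rewrite ?eqxx.
Qed.

Lemma partial_monomial_castmx m n m' n' (e : (m = m') * (n = n')) (A : 'M[F]_(m, n)) :
  partial_monomial A -> partial_monomial (castmx e A).
Proof.
move=> hA i j i' j'; rewrite !castmxE => /hA h /h.
by rewrite !(inj_eq (@cast_ord_inj _ _ _)).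
Qed.

Lemma partial_monomial_tens m n p q (A : 'M[F]_(m, n)) (B : 'M[F]_(p, q)) :
  partial_monomial A -> partial_monomial B -> partial_monomial (A *t B).
Proof.
move=> hA hB i j i' j'.
case: (mxtens_indexP i) => a b; case: (mxtens_indexP j) => c d.
case: (mxtens_indexP i') => a' b'; case: (mxtens_indexP j') => c' d'.
rewrite !tensmxE !mulf_eq0 !negb_or => /andP [h1 h2] /andP [h1' h2'].
rewrite (inj_eq (can_inj (@mxtens_indexK _ _))) (inj_eq (can_inj (@mxtens_indexK _ _))) !xpair_eqE.
by rewrite (hA _ _ _ _ h1 h1') (hB _ _ _ _ h2 h2').
Qed.

End PartialMonomial.

Section Hermitian.
Variable C : numClosedFieldType.
Implicit Types (m n p q : nat).

Lemma adjmx_trmxC m n (A : 'M[C]_(m, n)) : adjmx A = map_mx Num.conj A^T.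
Proof. by rewrite /adjmx map_trmx. Qed.

Lemma adjmx_entry m n (A : 'M[C]_(m, n)) i j : adjmx A i j = (A j i)^*.
Proof. by rewrite !mxE. Qed.

Lemma adjmxK m n (A : 'M[C]_(m, n)) : adjmx (adjmx A) = A.
Proof. by apply/matrixP => i j; rewrite !adjmx_entry conjCK. Qed.

Lemma adjmxM m n p (A : 'M[C]_(m, n)) (B : 'M[C]_(n, p)) :
  adjmx (A *m B) = adjmx B *m adjmx A.
Proof. by rewrite /adjmx map_mxM trmx_mul. Qed.

Lemma adjmxD m n (A B : 'M[C]_(m, n)) : adjmx (A + B) = adjmx A + adjmx B.
Proof. by rewrite /adjmx map_mxD linearD. Qed.

Lemma adjmxN m n (A : 'M[C]_(m, n)) : adjmx (- A) = - adjmx A.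
Proof. by rewrite /adjmx map_mxN linearN. Qed.

Lemma adjmxB m n (A B : 'M[C]_(m, n)) : adjmx (A - B) = adjmx A - adjmx B.
Proof. by rewrite adjmxD adjmxN. Qed.

Lemma adjmxZ m n a (A : 'M[C]_(m, n)) : adjmx (a *: A) = a^* *: adjmx A.
Proof. by apply/matrixP => i j; rewrite !mxE rmorphM. Qed.

Lemma adjmx1 n : adjmx (1%:M : 'M[C]_n) = 1%:M.
Proof. by rewrite /adjmx map_mx1 trmx1. Qed.

Lemma adjmx_block m1 m2 n1 n2 (a : 'M[C]_(m1, n1)) (b : 'M[C]_(m1, n2))
  (c : 'M[C]_(m2, n1)) (d : 'M[C]_(m2, n2)) :
  adjmx (block_mx a b c d) = block_mx (adjmx a) (adjmx c) (adjmx b) (adjmx d).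
Proof. by rewrite /adjmx map_block_mx tr_block_mx. Qed.

Lemma adjmx_row m n1 n2 (a : 'M[C]_(m, n1)) (b : 'M[C]_(m, n2)) :
  adjmx (row_mx a b) = col_mx (adjmx a) (adjmx b).
Proof. by rewrite /adjmx map_row_mx tr_row_mx. Qed.

Lemma adjmx_castmx m n m' n' (e : (m = m') * (n = n')) (A : 'M[C]_(m, n)) :
  adjmx (castmx e A) = castmx (e.2, e.1) (adjmx A).
Proof. by rewrite /adjmx map_castmx trmx_cast. Qed.

Lemma adjmx_tens m n p q (A : 'M[C]_(m, n)) (B : 'M[C]_(p, q)) :
  adjmx (A *t B) = adjmx A *t adjmx B.
Proof. by rewrite !adjmx_trmxC trmx_tens map_mxT. Qed.

Lemma adjmx_perm n (s : 'S_n) : adjmx (perm_mx s : 'M[C]_n) = perm_mx s^-1.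
Proof. by rewrite /adjmx map_perm_mx tr_perm_mx. Qed.

Lemma adjmx_pid m n r : adjmx (pid_mx r : 'M[C]_(m, n)) = pid_mx r.
Proof. by rewrite /adjmx map_pid_mx tr_pid_mx. Qed.

Lemma unitarymx_adjP m n (U : 'M[C]_(m, n)) :
  reflect (U *m adjmx U = 1%:M) (U \is unitarymx).
Proof. by rewrite adjmx_trmxC; apply: unitarymxP. Qed.

Lemma mul_adj_unitary n (U : 'M[C]_n) : U \is unitarymx -> adjmx U *m U = 1%:M.
Proof. by move/unitarymx_adjP/mulmx1C. Qed.

Definition sform n (P : 'M[C]_n) (x y : 'cV[C]_n) : C := (adjmx x *m P *m y) 0 0.

Lemma sform_congr m n (T : 'M[C]_(m, n)) P x y :
  sform (adjmx T *m P *m T) x y = sform P (T *m x) (T *m y).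
Proof. by rewrite /sform adjmxM !mulmxA. Qed.

Lemma sform_adjmx n (P : 'M[C]_n) x y : sform (adjmx P) x y = (sform P y x)^*.
Proof. by rewrite /sform -adjmx_entry !adjmxM adjmxK mulmxA. Qed.

Lemma sformD n (P Q : 'M[C]_n) x y : sform (P + Q) x y = sform P x y + sform Q x y.
Proof. by rewrite /sform mulmxDr mulmxDl mxE. Qed.

Lemma sformN n (P : 'M[C]_n) x y : sform (- P) x y = - sform P x y.
Proof. by rewrite /sform mulmxN mulNmx mxE. Qed.

Lemma sformB n (P Q : 'M[C]_n) x y : sform (P - Q) x y = sform P x y - sform Q x y.
Proof. by rewrite sformD sformN. Qed.

Lemma sformZ n a (P : 'M[C]_n) x y : sform (a *: P) x y = a * sform P x y.
Proof. by rewrite /sform -scalemxAr -scalemxAl mxE. Qed.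

Lemma sformDl n (P : 'M[C]_n) x y z : sform P (x + z) y = sform P x y + sform P z y.
Proof. by rewrite /sform adjmxD !mulmxDl mxE. Qed.

Lemma sformDr n (P : 'M[C]_n) x y z : sform P x (y + z) = sform P x y + sform P x z.
Proof. by rewrite /sform mulmxDr mxE. Qed.

Lemma sformZl n (P : 'M[C]_n) a x y : sform P (a *: x) y = a^* * sform P x y.
Proof. by rewrite /sform adjmxZ -!scalemxAl mxE. Qed.

Lemma sformZr n (P : 'M[C]_n) a x y : sform P x (a *: y) = a * sform P x y.
Proof. by rewrite /sform -scalemxAr mxE. Qed.

Lemma sform_delta n (P : 'M[C]_n) i j : sform P (delta_mx i 0) (delta_mx j 0) = P i j.
Proof.
rewrite /sform; have -> : adjmx (delta_mx i 0 : 'cV[C]_n) = delta_mx 0 i.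
  apply/matrixP => a b; rewrite !mxE [a]ord1 eqxx andbC.
  by case: (b == i); rewrite /= ?conjC1 ?conjC0.
by rewrite -rowE -colE !mxE.
Qed.

Lemma sform_diag n (d : 'rV[C]_n) x y :
  sform (diag_mx d) x y = \sum_j d 0 j * ((x j 0)^* * y j 0).
Proof.
rewrite /sform mul_mx_diag !mxE; apply: eq_bigr => j _.
by rewrite !mxE mulrCA mulrA.
Qed.

Lemma sform_eq0 n (H : 'M[C]_n) : (forall v, sform H v v = 0) -> H = 0.
Proof.
move=> H0; apply/matrixP => i j; rewrite mxE.
set x : 'cV[C]_n := delta_mx i 0; set y : 'cV[C]_n := delta_mx j 0.
have := H0 (x + y); have := H0 (x + 'i *: y).
rewrite !(sformDl, sformDr, sformZl, sformZr) !H0 !sform_delta conjCi.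
move=> hi h1; have h2 : 'i * (H i j - H j i) = 0.
  by apply: etrans hi; ring.
move: h2 => /eqP; rewrite mulf_eq0 (negbTE (neq0Ci C)) /= subr_eq0 => /eqP hji.
have : H i j *+ 2 = 0 by apply: etrans h1; rewrite -hji; ring.
by move/eqP; rewrite mulrn_eq0 => /eqP.
Qed.

Lemma psd_herm n (P : 'M[C]_n) : psd P -> adjmx P = P.
Proof.
move=> hP; apply/eqP; rewrite -subr_eq0; apply/eqP/sform_eq0 => v.
by rewrite sformB sform_adjmx (conj_Creal (ger0_real (hP v))) subrr.
Qed.

Lemma sform_herm n (P : 'M[C]_n) x y : adjmx P = P -> sform P y x = (sform P x y)^*.
Proof. by move=> hP; rewrite -sform_adjmx hP. Qed.

Lemma psd_sform_conj n (P : 'M[C]_n) x : psd P -> (sform P x x)^* = sform P x x.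
Proof. by move=> hP; apply/conj_Creal/ger0_real/hP. Qed.

Lemma psd_congr m n (T : 'M[C]_(m, n)) P : psd P -> psd (adjmx T *m P *m T).
Proof. by move=> hP v; have := hP (T *m v); rewrite -/(sform _ _ _) -sform_congr. Qed.

Lemma psd_conj m n (T : 'M[C]_(m, n)) P : psd P -> psd (T *m P *m adjmx T).
Proof. by rewrite -{1}(adjmxK T); apply: psd_congr. Qed.

Lemma psdD n (P Q : 'M[C]_n) : psd P -> psd Q -> psd (P + Q).
Proof. by move=> hP hQ v; rewrite -/(sform _ _ _) sformD addr_ge0 ?hP ?hQ. Qed.

Lemma psdZ n a (P : 'M[C]_n) : 0 <= a -> psd P -> psd (a *: P).
Proof. by move=> ha hP v; rewrite -/(sform _ _ _) sformZ mulr_ge0 ?hP. Qed.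

Lemma psd_diag n (d : 'rV[C]_n) : (forall j, 0 <= d 0 j) -> psd (diag_mx d).
Proof.
move=> hd v; rewrite -/(sform _ _ _) sform_diag; apply: sumr_ge0 => j _.
by rewrite mulr_ge0 // mulrC mul_conjC_ge0.
Qed.

Lemma psd1 n : psd (1%:M : 'M[C]_n).
Proof.
by rewrite -diag_const_mx; apply: psd_diag => j; rewrite mxE ler01.
Qed.

Lemma psd_adjmx_mul m n (M : 'M[C]_(m, n)) : psd (adjmx M *m M).
Proof. by rewrite -[adjmx M]mulmx1; apply/psd_congr/psd1. Qed.

Lemma posdef_unit n (P : 'M[C]_n) : posdef P -> P \in unitmx.
Proof.
move=> hP; rewrite unitmxE unitfE; apply/negP => /det0P [v vn0 hv].
have : adjmx v != 0 by apply: contra vn0 => /eqP h; rewrite -[v]adjmxK h /adjmx map_mx0 trmx0.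
by move/hP; rewrite adjmxK hv mul0mx mxE ltxx.
Qed.

Lemma adjmx_invmx n (P : 'M[C]_n) : adjmx P = P -> adjmx (invmx P) = invmx P.
Proof.
move=> hP; case: (boolP (P \in unitmx)) => hu; last by rewrite invmx_out.
have h : adjmx (invmx P) *m P = 1%:M by rewrite -{2}hP -adjmxM mulmxV // adjmx1.
by rewrite -[adjmx _]mulmx1 -(mulmxV hu) mulmxA h mul1mx.
Qed.

Lemma psd_invmx n (P : 'M[C]_n) : psd P -> psd (invmx P).
Proof.
move=> hP; case: (boolP (P \in unitmx)) => hu; last by rewrite invmx_out.
have -> : invmx P = adjmx (invmx P) *m P *m invmx P.
  by rewrite adjmx_invmx ?psd_herm // mulVmx // mul1mx.
exact: psd_congr.
Qed.

Lemma quad_ge0_discr (a b c : C) : 0 <= a -> 0 <= b ->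
  (forall t, 0 <= a + t * c + (t * c)^* + t^* * t * b) -> c * c^* <= a * b.
Proof.
move=> ha hb hq; have bC : b^* = b by apply/conj_Creal/ger0_real.
have [c0 | cn0] := eqVneq c 0; first by rewrite c0 mul0r mulr_ge0.
have [b0 | bn0] := eqVneq b 0.
  have aC : (- (a + 1))^* = - (a + 1).
    by apply/conj_Creal; rewrite realN rpredD ?ger0_real.
  have := hq (- (a + 1) / c); rewrite divfK // b0 mulr0 addr0 aC.
  have -> : a + - (a + 1) + - (a + 1) = - (a + 2%:R) by ring.
  by rewrite oppr_ge0 => /(lt_le_trans (ltr_wpDl ha (ltr0n _ 2))); rewrite ltxx.
have bp : 0 < b by rewrite lt_def bn0 hb.
have := hq (- c^* / b); rewrite !(rmorphM, rmorphN) fmorphV /= conjCK bC.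
have -> : a + - c^* / b * c + - c / b * c^* + - c / b * (- c^* / b) * b =
  a - c * c^* / b by field.
by rewrite subr_ge0 ler_pdivrMr.
Qed.

Lemma sform_CS n (P : 'M[C]_n) x y : psd P ->
  sform P x y * (sform P x y)^* <= sform P x x * sform P y y.
Proof.
move=> hP; apply: quad_ge0_discr (hP x) (hP y) _ => t.
rewrite -/(sform P x x) -/(sform P y y) rmorphM /=.
have := hP (x + t *: y); rewrite -/(sform _ _ _).
rewrite !(sformDl, sformDr, sformZl, sformZr) (sform_herm x y (psd_herm hP)).
by congr (0 <= _); ring.
Qed.

Lemma psd_spectral n (P : 'M[C]_n) : psd P -> exists U (d : 'rV[C]_n),
  [/\ U \is unitarymx, forall j, 0 <= d 0 j & P = adjmx U *m diag_mx d *m U].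
Proof.
move=> hP; have /orthomx_spectralP hE : P \is normalmx.
  by apply/normalmxP; rewrite -adjmx_trmxC psd_herm.
have hU := spectral_unitarymx P.
rewrite invmx_unitary // -adjmx_trmxC in hE.
move: hE hU; set U := spectralmx P; set d := spectral_diag P => hE hU.
exists U, d; split => // j.
have := hP (adjmx U *m delta_mx j 0); rewrite -/(sform _ _ _).
rewrite -sform_congr adjmxK {1}hE !mulmxA (unitarymx_adjP _ hU) mul1mx.
by rewrite -mulmxA (unitarymx_adjP _ hU) mulmx1 sform_delta mxE eqxx mulr1n.
Qed.

Lemma psd_sqrt_exists n (P : 'M[C]_n) : psd P -> exists S, psd S /\ S *m S = P.
Proof.
move=> /psd_spectral [U [d [hU hd ->]]].
exists (adjmx U *m diag_mx (\row_j sqrtC (d 0 j)) *m U); split.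
  by apply/psd_congr/psd_diag => j; rewrite mxE sqrtC_ge0.
rewrite !mulmxA -[_ *m U *m adjmx U]mulmxA (unitarymx_adjP _ hU) mulmx1.
rewrite -[_ *m diag_mx _ *m diag_mx _]mulmxA mulmx_diag.
by congr (_ *m diag_mx _ *m _); apply/rowP => j; rewrite !mxE -expr2 sqrtCK.
Qed.

Lemma sqrtm_spec n (P : 'M[C]_n) : psd P -> psd (sqrtm P) /\ sqrtm P *m sqrtm P = P.
Proof. by move/psd_sqrt_exists; rewrite /sqrtm; apply: epsilon_spec. Qed.

Lemma psd_diag_ge0 n (P : 'M[C]_n) j : psd P -> 0 <= P j j.
Proof. by move/(_ (delta_mx j 0)); rewrite -/(sform _ _ _) sform_delta. Qed.

Lemma psd_mxtrace_ge0 n (P : 'M[C]_n) : psd P -> 0 <= \tr P.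
Proof. by move=> hP; apply: sumr_ge0 => j _; apply: psd_diag_ge0. Qed.

Lemma adjmx_mul_diag n (N : 'M[C]_n) j : (adjmx N *m N) j j = \sum_i `|N i j| ^+ 2.
Proof. by rewrite mxE; apply: eq_bigr => i _; rewrite !mxE mulrC normCK. Qed.

Lemma mxtrace_le_of_sqr n (S M : 'M[C]_n) : psd S ->
  psd (S *m S - adjmx M *m M) -> \tr M \is Num.real -> \tr M <= \tr S.
Proof.
move=> /psd_spectral [U [s [hU hs ->]]] hSM Mr.
have hUU := unitarymx_adjP _ hU; have hUU' := mul_adj_unitary hU.
set N := U *m M *m adjmx U.
have trN : \tr M = \tr N by rewrite /N mxtrace_mulC mulmxA hUU' mul1mx.
have trS : \tr (adjmx U *m diag_mx s *m U) = \sum_j s 0 j.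
  by rewrite mxtrace_mulC mulmxA hUU mul1mx mxtrace_diag.
have eN : U *m (adjmx U *m diag_mx s *m U *m (adjmx U *m diag_mx s *m U)
    - adjmx M *m M) *m adjmx U = diag_mx s *m diag_mx s - adjmx N *m N.
  rewrite /N !adjmxM adjmxK mulmxBr mulmxBl !mulmxA hUU mul1mx.
  by rewrite -!(mulmxA _ U (adjmx U)) hUU !mulmx1 -(mulmxA _ (adjmx U) U) hUU' mulmx1.
clearbody N.
(* in the eigenbasis of S, |N_jj|^2 <= (N^* N)_jj <= s_j^2 *)
have diagN j : `|N j j| <= s 0 j.
  have := psd_diag_ge0 j (psd_conj U hSM); rewrite eN.
  rewrite [((_ : 'M[C]_n) - _) j j]mxE [(- (_ : 'M[C]_n)) j j]mxE subr_ge0.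
  rewrite mulmx_diag adjmx_mul_diag !mxE eqxx mulr1n -expr2 => hle.
  rewrite -ler_sqr ?nnegrE //; apply: le_trans hle.
  by rewrite (bigD1 j) //= lerDl sumr_ge0 // => i _; apply: exprn_ge0.
rewrite trN trS; apply: le_trans (real_ler_norm _) _; first by rewrite -trN.
apply: le_trans (ler_norm_sum _ _ _) _.
by apply: ler_sum => j _; apply: diagN.
Qed.

Lemma eigenvalue_diag n (d : 'rV[C]_n) a :
  eigenvalue (diag_mx d) a = [exists j, a == d 0 j].
Proof.
rewrite eigenvalue_root_char char_poly_trig ?diag_mx_is_trig // /root horner_prod.
apply/prodf_eq0/existsP => [[j _ hj] | [j hj]];
  by exists j => //; move: hj; rewrite !mxE eqxx mulr1n hornerXsubC subr_eq0.
Qed.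

Lemma eigenvalue_unitary_conj n (U P : 'M[C]_n) a : U \is unitarymx ->
  eigenvalue (adjmx U *m P *m U) a = eigenvalue P a.
Proof.
move=> hU; have Uu := unitarymx_unit hU.
have -> : adjmx U *m P *m U = conjmx (invmx U) P.
  by rewrite conjVmx // invmx_unitary // adjmx_trmxC.
apply/idP/idP; last rewrite -{1}(conjmxVK P Uu); apply: eigenvalue_conjmx;
  by rewrite ?stablemx_unit ?row_free_unit ?unitmx_inv.
Qed.

Lemma eigenvalue_spectral n (U : 'M[C]_n) d a : U \is unitarymx ->
  eigenvalue (adjmx U *m diag_mx d *m U) a = [exists j, a == d 0 j].
Proof. by move=> hU; rewrite eigenvalue_unitary_conj // eigenvalue_diag. Qed.

Lemma sform_spectral n (U : 'M[C]_n) d v :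
  sform (adjmx U *m diag_mx d *m U) v v = \sum_j d 0 j * `|(U *m v) j 0| ^+ 2.
Proof. by rewrite sform_congr sform_diag; apply: eq_bigr => j _; rewrite normCK (mulrC (_ ^*)). Qed.

Lemma sform1_unitary n (U : 'M[C]_n) v : U \is unitarymx ->
  sform 1%:M v v = \sum_j `|(U *m v) j 0| ^+ 2.
Proof.
move=> hU; rewrite -(mul_adj_unitary hU) -[adjmx U]mulmx1 -diag_const_mx.
by rewrite sform_spectral; apply: eq_bigr => j _; rewrite mxE mul1r.
Qed.

Lemma psd_eigenvalue n (P : 'M[C]_n) : psd P -> exists U (d : 'rV[C]_n),
  [/\ U \is unitarymx, forall j, 0 <= d 0 j, P = adjmx U *m diag_mx d *m U
     & forall a, eigenvalue P a = [exists j, a == d 0 j]].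
Proof.
move=> /psd_spectral [U [d [hU hd hE]]]; exists U, d; split => // a.
by rewrite hE eigenvalue_spectral.
Qed.

Lemma lambda_min_spec n (P : 'M[C]_n) : (0 < n)%N -> psd P ->
  forall a, eigenvalue P a -> lambda_min P <= a.
Proof.
move=> hn /psd_eigenvalue [U [d [_ hd _ eigP]]].
have [jm _ hmin] := @real_arg_minP _ _ (Ordinal hn) predT (fun j => d 0 j) isT
  (fun j _ => ger0_real (hd j)).
have ex : exists l, eigenvalue P l /\ forall b, eigenvalue P b -> l <= b.
  exists (d 0 jm); rewrite eigP; split; first by apply/existsP; exists jm.
  by move=> b; rewrite eigP => /existsP [j /eqP ->]; apply: hmin.
by have [] := epsilon_spec (inhabits 0) _ ex.
Qed.

Lemma lambda_max_spec n (P : 'M[C]_n) : (0 < n)%N -> psd P ->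
  forall a, eigenvalue P a -> a <= lambda_max P.
Proof.
move=> hn /psd_eigenvalue [U [d [_ hd _ eigP]]].
have [jm _ hmax] := @real_arg_maxP _ _ (Ordinal hn) predT (fun j => d 0 j) isT
  (fun j _ => ger0_real (hd j)).
have ex : exists l, eigenvalue P l /\ forall b, eigenvalue P b -> b <= l.
  exists (d 0 jm); rewrite eigP; split; first by apply/existsP; exists jm.
  by move=> b; rewrite eigP => /existsP [j /eqP ->]; apply: hmax.
by have [] := epsilon_spec (inhabits 0) _ ex.
Qed.

Lemma lambda_min_le_sform n (P : 'M[C]_n) v : (0 < n)%N -> psd P ->
  lambda_min P * sform 1%:M v v <= sform P v v.
Proof.
move=> hn hP; have [U [d [hU _ hE eigP]]] := psd_eigenvalue hP.
rewrite (sform1_unitary _ hU) [in sform P v v]hE sform_spectral mulr_sumr.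
apply: ler_sum => j _; rewrite ler_wpM2r ?exprn_ge0 // lambda_min_spec // eigP.
by apply/existsP; exists j.
Qed.

Lemma sform_le_lambda_max n (P : 'M[C]_n) v : (0 < n)%N -> psd P ->
  sform P v v <= lambda_max P * sform 1%:M v v.
Proof.
move=> hn hP; have [U [d [hU _ hE eigP]]] := psd_eigenvalue hP.
rewrite (sform1_unitary _ hU) [in sform P v v]hE sform_spectral mulr_sumr.
apply: ler_sum => j _; rewrite ler_wpM2r ?exprn_ge0 // lambda_max_spec // eigP.
by apply/existsP; exists j.
Qed.

Lemma lambda_max_ge0 n (P : 'M[C]_n) : (0 < n)%N -> psd P -> 0 <= lambda_max P.
Proof.
move=> hn hP; have [U [d [_ hd _ eigP]]] := psd_eigenvalue hP.
apply: le_trans (hd (Ordinal hn)) (lambda_max_spec hn hP _).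
by rewrite eigP; apply/existsP; exists (Ordinal hn).
Qed.

Lemma sform_le_opnorm n (H : 'M[C]_n) v : (0 < n)%N -> psd H ->
  sform H v v <= opnorm H * sform 1%:M v v.
Proof.
move=> hn hH; have hHH := psd_adjmx_mul H.
have hL0 := lambda_max_ge0 hn hHH.
have hcs := sform_CS v (H *m v) (psd1 (n:=n)).
rewrite -[sform 1%:M (H *m v) _]sform_congr mulmx1 in hcs.
have e : sform 1%:M v (H *m v) = sform H v v by rewrite /sform mulmx1 mulmxA.
rewrite /opnorm -ler_sqr ?nnegrE ?mulr_ge0 ?sqrtC_ge0 ?(psd1 v) ?hH //.
rewrite exprMn sqrtCK expr2 -{2}(psd_sform_conj v hH) -e; apply: le_trans hcs _.
by rewrite expr2 [X in _ <= X]mulrCA ler_wpM2l ?(psd1 v) // sform_le_lambda_max.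
Qed.

Section Sandwich.
Variables (n : nat) (A B : 'M[C]_n).
Hypotheses (hA : psd A) (Au : A \in unitmx) (hB : psd B).
Let K := B *m invmx A *m B.
Hypothesis hKA : forall v, sform K v v <= sform A v v.

Let hAi : psd (invmx A). Proof. exact: psd_invmx. Qed.
Let hK : psd K. Proof. by rewrite /K -{1}(psd_herm hB); apply/psd_congr/hAi. Qed.

(* Cauchy-Schwarz for the form of A^-1 at (Bv, Av) *)
Lemma sform_le_of_sandwich v : sform B v v <= sform A v v.
Proof.
have := sform_CS (B *m v) (A *m v) hAi.
have -> : sform (invmx A) (B *m v) (A *m v) = sform B v v.
  by rewrite /sform adjmxM (psd_herm hB) !mulmxA -(mulmxA _ _ A) mulVmx ?mulmx1.
rewrite -!sform_congr !(psd_herm hA, psd_herm hB) -(mulmxA A) mulVmx // mulmx1.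
rewrite -/K (psd_sform_conj _ hB) -!expr2 => hcs.
rewrite -ler_sqr ?nnegrE ?hA ?hB //; apply: le_trans hcs _.
by rewrite expr2 ler_wpM2r ?hA ?hKA.
Qed.

(* Cauchy-Schwarz for the form of B at (v, A^-1 B v) *)
Lemma psd_sub_sandwich : psd (B - K).
Proof.
move=> v; rewrite -/(sform _ _ _) sformB subr_ge0.
set w := invmx A *m B *m v.
have hcs := sform_CS v w hB.
have eK : sform B v w = sform K v v by rewrite /sform /K !mulmxA.
have hw : sform B w w <= sform K v v.
  apply: le_trans (sform_le_of_sandwich w) _; rewrite /w -sform_congr.
  rewrite adjmxM adjmx_invmx ?(psd_herm hA, psd_herm hB) //.
  by rewrite -(mulmxA _ _ A) mulVmx // mulmx1 mulmxA.
rewrite eK (psd_sform_conj _ hK) in hcs.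
have {hcs hw} hcs := le_trans hcs (ler_wpM2l (hB v) hw).
have [k0 | kn0] := eqVneq (sform K v v) 0; first by rewrite k0 hB.
by rewrite -(ler_pM2r (_ : 0 < sform K v v)) // lt_def kn0 hK.
Qed.

End Sandwich.

Lemma unitarymx_perm n (s : 'S_n) : (perm_mx s : 'M[C]_n) \is unitarymx.
Proof. by apply/unitarymx_adjP; rewrite adjmx_perm -perm_mxM mulgV perm_mx1. Qed.

Lemma unitarymx1 n : (1%:M : 'M[C]_n) \is unitarymx.
Proof. by apply/unitarymx_adjP; rewrite adjmx1 mulmx1. Qed.

Lemma castmx_mulmx m m' n n' p p' (e1 : m = m') (e2 : n = n') (e3 : p = p')
  (A : 'M[C]_(m, n)) (B : 'M[C]_(n, p)) :
  castmx (e1, e2) A *m castmx (e2, e3) B = castmx (e1, e3) (A *m B).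
Proof. by case: m' / e1; case: n' / e2; case: p' / e3; rewrite !castmx_id. Qed.

Lemma castmx1 m m' (e : m = m') : castmx (e, e) (1%:M : 'M[C]_m) = 1%:M.
Proof. by case: m' / e; rewrite castmx_id. Qed.

Lemma unitarymx_castmx m m' (e : m = m') (U : 'M[C]_m) :
  U \is unitarymx -> castmx (e, e) U \is unitarymx.
Proof.
by move/unitarymx_adjP=> hU; apply/unitarymx_adjP; rewrite adjmx_castmx castmx_mulmx hU castmx1.
Qed.

Lemma tensmx11 m n : (1%:M : 'M[C]_m) *t (1%:M : 'M[C]_n) = 1%:M.
Proof.
apply/matrixP => i j.
case: (mxtens_indexP i) => a b; case: (mxtens_indexP j) => c d.
rewrite tensmxE !mxE (inj_eq (can_inj (@mxtens_indexK _ _))) xpair_eqE.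
by case: (a == c); case: (b == d); rewrite ?mulr1 ?mulr0 ?mul0r.
Qed.

Lemma unitarymx_tens m n (A : 'M[C]_m) (B : 'M[C]_n) :
  A \is unitarymx -> B \is unitarymx -> A *t B \is unitarymx.
Proof.
move=> /unitarymx_adjP hA /unitarymx_adjP hB; apply/unitarymx_adjP.
by rewrite adjmx_tens tensmx_mul hA hB tensmx11.
Qed.

Lemma conjmx_unitary n (U A : 'M[C]_n) : U \is unitarymx -> conjmx U A = U *m A *m adjmx U.
Proof. by move=> hU; rewrite conjymx // adjmx_trmxC. Qed.

Lemma pinvmx_isometry m n (V : 'M[C]_(m, n)) : partial_monomial V ->
  adjmx V *m V = 1%:M -> pinvmx V = adjmx V.
Proof.
move=> hV hVV; have [s hs] := col_ebase_partial_monomial hV.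
have hfull : row_full V by apply/row_fullP; exists (adjmx V).
(* [V *m pinvmx V] is the orthogonal projection [L pid L^*] with [L = col_ebase V] *)
have hproj : adjmx (V *m pinvmx V) = V *m pinvmx V.
  have -> : V *m pinvmx V = perm_mx s *m pid_mx (\rank V) *m adjmx (perm_mx s).
    rewrite -{1}(mulmx_ebase V) /pinvmx -!mulmxA (mulmxA (row_ebase V)).
    rewrite mulmxV ?row_ebase_unit // mul1mx (mulmxA (pid_mx _)) pid_mx_id ?rank_leq_col //.
    by rewrite hs invmx_unitary ?unitarymx_perm // -adjmx_trmxC mulmxA.
  by rewrite !adjmxM adjmxK adjmx_pid mulmxA.
transitivity (adjmx V *m (V *m pinvmx V)); first by rewrite mulmxA hVV mul1mx.
by rewrite -hproj adjmxM mulmxA -adjmxM (mulVpmx hfull) adjmx1 mul1mx.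
Qed.

Lemma conjmx_isometry m n (V : 'M[C]_(m, n)) A : partial_monomial V ->
  adjmx V *m V = 1%:M -> conjmx V A = V *m A *m adjmx V.
Proof. by move=> hV hVV; rewrite /conjmx pinvmx_isometry. Qed.

Lemma mxtrace_isometry m n (V : 'M[C]_(m, n)) A :
  adjmx V *m V = 1%:M -> \tr (V *m A *m adjmx V) = \tr A.
Proof. by move=> hVV; rewrite mxtrace_mulC mulmxA hVV mul1mx. Qed.

Lemma sform_le_of_opnorm n (H A : 'M[C]_n) c v : (0 < n)%N -> psd H -> psd A ->
  0 <= c -> c * opnorm H <= lambda_min A -> c * sform H v v <= sform A v v.
Proof.
move=> hn hH hA hc hle; apply: le_trans (ler_wpM2l hc (sform_le_opnorm v hn hH)) _.
rewrite mulrA; apply: le_trans (lambda_min_le_sform v hn hA).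
by rewrite ler_wpM2r ?(psd1 v).
Qed.

Lemma fidelity_ge_mxtrace n (rho sigma W : 'M[C]_n) : psd rho ->
  psd (sigma - adjmx W *m rho *m W) -> \tr (rho *m W) \is Num.real ->
  \tr (rho *m W) <= fidelity rho sigma.
Proof.
move=> hrho hW hr; have [hR hRR] := sqrtm_spec hrho; rewrite /fidelity.
move: hR hRR; set R := sqrtm rho => hR hRR; have hRh := psd_herm hR.
set X := R *m sigma *m R; set M := R *m W *m R.
have trM : \tr M = \tr (rho *m W) by rewrite /M mxtrace_mulC mulmxA hRR.
have hXM : psd (X - adjmx M *m M).
  have -> : X - adjmx M *m M = adjmx R *m (sigma - adjmx W *m rho *m W) *m R.
    by rewrite /X /M !adjmxM hRh -hRR mulmxBr mulmxBl !mulmxA.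
  exact: psd_congr.
have hX : psd X by rewrite -(subrK (adjmx M *m M) X); apply: psdD hXM (psd_adjmx_mul M).
have [hS hSS] := sqrtm_spec hX.
by rewrite -trM; apply: mxtrace_le_of_sqr; rewrite ?hSS ?trM.
Qed.

Lemma fidelity_conj_ge n (P rho sigma W : 'M[C]_n) : P \is unitarymx -> psd rho ->
  psd (sigma - adjmx W *m rho *m W) -> \tr (rho *m W) \is Num.real ->
  \tr (rho *m W) <= fidelity (P *m rho *m adjmx P) (P *m sigma *m adjmx P).
Proof.
move=> hP hrho hW hr; have hPP := mul_adj_unitary hP.
have cancelP (Y : 'M[C]_n) : Y *m adjmx P *m P = Y by rewrite -mulmxA hPP mulmx1.
have trW : \tr (P *m rho *m adjmx P *m (P *m W *m adjmx P)) = \tr (rho *m W).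
  by rewrite !mulmxA cancelP mxtrace_mulC !mulmxA hPP mul1mx.
rewrite -trW; apply: fidelity_ge_mxtrace; [exact: psd_conj | | by rewrite trW].
have -> : P *m sigma *m adjmx P - adjmx (P *m W *m adjmx P) *m (P *m rho *m adjmx P)
    *m (P *m W *m adjmx P) = P *m (sigma - adjmx W *m rho *m W) *m adjmx P.
  by rewrite !adjmxM adjmxK mulmxBr mulmxBl !mulmxA !cancelP.
exact: psd_conj.
Qed.

Lemma adjmx_1B_invmx_mul n (rho G : 'M[C]_n) : rho \in unitmx ->
  adjmx rho = rho -> adjmx G = G ->
  adjmx (1%:M - invmx rho *m G) *m rho *m (1%:M - invmx rho *m G) =
  rho - G *+ 2 + G *m invmx rho *m G.
Proof.
move=> rhou hrho hG.
rewrite adjmxB adjmx1 adjmxM (adjmx_invmx hrho) hG.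
rewrite mulmxBl mul1mx mulmxBr mulmx1 mulmxBl !mulmxA !mulmxKV // mulmxV // mul1mx.
by move: (G *m _ *m G) => X; apply/matrixP => i j; rewrite !mxE; ring.
Qed.

Lemma psd_block_sym n (X Y : 'M[C]_n) : psd (X + Y) -> psd (X - Y) ->
  psd (block_mx X Y Y X).
Proof.
move=> hXY hXY'.
pose T1 : 'M[C]_(n, n + n) := row_mx 1%:M 1%:M.
pose T2 : 'M[C]_(n, n + n) := row_mx 1%:M (- 1%:M).
have -> : block_mx X Y Y X =
    2^-1 *: (adjmx T1 *m (X + Y) *m T1 + adjmx T2 *m (X - Y) *m T2).
  rewrite /T1 /T2 !adjmx_row adjmxN adjmx1 !mul_col_mx !mul1mx !mulNmx !mul1mx.
  rewrite !mul_mx_row !mulmxN !mulmx1 !opp_row_mx opprK -!block_mxEv.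
  rewrite add_block_mx scale_block_mx.
  by congr block_mx; apply/matrixP => i j; rewrite !mxE; field.
by apply/psdZ/psdD; rewrite ?invr_ge0 ?ler0n //; apply: psd_congr.
Qed.

Lemma fidelity_block_ge n (P : 'M[C]_(n + n)) (A B : 'M[C]_n) :
  P \is unitarymx -> psd A -> A \in unitmx -> psd B -> psd (B - B *m invmx A *m B) ->
  \tr A *+ 2 - \tr B <=
  fidelity (P *m block_mx A 0 0 A *m adjmx P) (P *m block_mx A B B A *m adjmx P).
Proof.
move=> hP hA Au hB hBK.
set rho := block_mx A 0 0 A; set G := 2^-1 *: block_mx B (- B) (- B) B.
have rhou : rho \in unitmx by rewrite block_diag_mx_unit Au.
have hrho : psd rho by apply: psd_block_sym; rewrite ?addr0 ?subr0.
have hG : adjmx G = G.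
  rewrite adjmxZ adjmx_block !adjmxN (psd_herm hB) conj_Creal //.
  by rewrite rpredV realn.
have trW : \tr (rho *m (1%:M - invmx rho *m G)) = \tr A *+ 2 - \tr B.
  rewrite mulmxBr mulmx1 mulmxA mulmxV // mul1mx raddfB /= mxtraceZ !mxtrace_block.
  by rewrite mulr2n; field.
rewrite -trW; apply: fidelity_conj_ge => //; last first.
  by rewrite trW rpredB ?rpredMn ?ger0_real ?psd_mxtrace_ge0.
have rhoV : invmx rho = block_mx (invmx A) 0 0 (invmx A) := invmx_block_diag rhou.
rewrite (adjmx_1B_invmx_mul rhou (psd_herm hrho) hG) rhoV.
have -> : block_mx A B B A - (rho - G *+ 2 + G *m block_mx (invmx A) 0 0 (invmx A) *m G)
  = block_mx (B - 2^-1 *: (B *m invmx A *m B)) (2^-1 *: (B *m invmx A *m B))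
             (2^-1 *: (B *m invmx A *m B)) (B - 2^-1 *: (B *m invmx A *m B)).
  rewrite /G -scalemxAl -scalemxAr -scalemxAl scalerA !mulmx_block.
  rewrite !(mulmx0, mul0mx, addr0, add0r, mulNmx, mulmxN, opprK) /rho.
  move: (B *m invmx A *m B) => K.
  rewrite mulr2n !(scale_block_mx, opp_block_mx, add_block_mx).
  by congr block_mx; apply/matrixP => i j; rewrite !mxE; field.
move: (B *m invmx A *m B) hBK => K hBK.
apply: psd_block_sym; rewrite ?subrK //.
suff -> : B - 2^-1 *: K - 2^-1 *: K = B - K by [].
by apply/matrixP => i j; rewrite !mxE; field.
Qed.

End Hermitian.

Section Anamorphic.
Variable C : numClosedFieldType.

Lemma pauliX_unitary : pauliX C \is unitarymx.
Proof.
apply/unitarymx_adjP/matrixP => i j; rewrite !mxE !big_ord_recl big_ord0 !mxE.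
by case: i => [[|[|//]] ?]; case: j => [[|[|//]] ?];
  rewrite /= ?conjC0 ?conjC1 ?mulr0 ?mul0r ?mulr1 ?addr0 ?add0r.
Qed.

Lemma pauliZ_unitary : pauliZ C \is unitarymx.
Proof.
have cN1 : (- 1 : C)^* = - 1 by rewrite conj_Creal ?realN ?real1.
apply/unitarymx_adjP/matrixP => i j; rewrite !mxE !big_ord_recl big_ord0 !mxE.
by case: i => [[|[|//]] ?]; case: j => [[|[|//]] ?];
  rewrite /= ?cN1 ?conjC0 ?conjC1 ?mulr0 ?mul0r ?mulr1 ?addr0 ?add0r ?mulrNN ?mulr1.
Qed.

Lemma pauliU_unitary d (k : d.-tuple (bool * bool)) : pauliU C k \is unitarymx.
Proof.
apply: unitarymx_castmx; elim: (tval k) => [|[a b] s IH] /=; first exact: unitarymx1.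
apply/unitarymx_castmx/unitarymx_tens => //; apply: mul_unitarymx.
  by case: a; [apply: pauliX_unitary | apply: unitarymx1].
by case: b; [apply: pauliZ_unitary | apply: unitarymx1].
Qed.

Lemma ket0_isometry k : adjmx (ket0 C k) *m ket0 C k = 1%:M.
Proof.
have h0 : (0 < 2 ^ k)%N by rewrite expn_gt0.
apply/matrixP => a b; rewrite [a]ord1 [b]ord1 !mxE (bigD1 (Ordinal h0)) //= big1.
  by rewrite !mxE /= conjC1 mulr1 addr0.
by move=> i hi; rewrite !mxE -[val i == 0%N]/(i == Ordinal h0) (negbTE hi) mulr0.
Qed.

Lemma Vmx_isometry d1 d2 (h : (d2 <= d1)%N) : adjmx (Vmx C h) *m Vmx C h = 1%:M.
Proof.
rewrite /Vmx adjmx_castmx /= castmx_mulmx adjmx_tens tensmx_mul adjmx1 mul1mx.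
by rewrite ket0_isometry tensmx11 castmx1.
Qed.

Lemma partial_monomial_ket0 k : partial_monomial (ket0 C k).
Proof.
move=> i j i' j'; rewrite [j]ord1 [j']ord1 !mxE eqxx.
case: (val i =P 0%N) => hi; last by rewrite eqxx.
case: (val i' =P 0%N) => hi'; last by rewrite eqxx.
by move=> _ _; apply/eqP/val_inj; rewrite hi hi'.
Qed.

Lemma partial_monomial_Vmx d1 d2 (h : (d2 <= d1)%N) : partial_monomial (Vmx C h).
Proof.
by apply/partial_monomial_castmx/partial_monomial_tens;
  [apply: partial_monomial1 | apply: partial_monomial_ket0].
Qed.

(* The operator-norm hypothesis makes [K = B A^-1 B <= A]. *)
Lemma psd_sub_sandwich_scaled n (Mo Mc : 'M[C]_n) (eta : nat) :
  (0 < n)%N -> (0 < eta)%N -> psd Mo -> Mo \in unitmx -> psd Mc ->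
  (eta%:R ^+ 2)^-1 * opnorm (Mc *m invmx Mo *m Mc) <= 4^-1 * lambda_min Mo ->
  let A := 2^-1 *: Mo in let B := eta%:R^-1 *: Mc in psd (B - B *m invmx A *m B).
Proof.
move=> hn heta hMo Mou hMc hcond A B.
have eta0 : (eta%:R : C) != 0 by rewrite pnatr_eq0 -lt0n.
have h2 : (2 : C) != 0 by rewrite pnatr_eq0.
set Pm := Mc *m invmx Mo *m Mc in hcond.
have hPm : psd Pm by rewrite /Pm -{1}(psd_herm hMc); apply/psd_congr/psd_invmx.
apply: psd_sub_sandwich => //; rewrite ?unitmxZ ?unitfE ?invr_eq0 //.
- by apply: psdZ; rewrite ?invr_ge0 ?ler0n.
- by apply: psdZ; rewrite ?invr_ge0 ?ler0n.
move=> v; have -> : B *m invmx A *m B = (2 / eta%:R ^+ 2) *: Pm.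
  rewrite invmxZ ?unitmxZ ?unitfE ?invr_eq0 // /B -!scalemxAl -!scalemxAr -scalemxAl.
  by rewrite !scalerA invrK; congr (_ *: _); field.
have hc : 0 <= 4 / eta%:R ^+ 2 :> C by rewrite divr_ge0 ?exprn_ge0 ?ler0n.
have hle : 4 / eta%:R ^+ 2 * opnorm Pm <= lambda_min Mo.
  by move: (ler_wpM2l (ler0n C 4) hcond); rewrite !mulrA mulfV ?pnatr_eq0 // mul1r.
have h4 : 4 = 2 * 2 :> C by rewrite -natrM.
have := sform_le_of_opnorm v hn hPm hMo hc hle.
rewrite sformZ /A sformZ h4.
have -> : 2 / eta%:R ^+ 2 * sform Pm v v = 2^-1 * (2 * 2 / eta%:R ^+ 2 * sform Pm v v).
  by field.
by move=> hsf; rewrite ler_wpM2l ?invr_ge0 ?ler0n.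
Qed.

Lemma fidelity_Ma_ge n (P : 'M[C]_(n + n)) (Mo Mc : 'M[C]_n) (eta : nat) :
  (0 < n)%N -> (0 < eta)%N -> P \is unitarymx ->
  psd Mo -> Mo \in unitmx -> \tr Mo = 1 -> psd Mc -> \tr Mc = 1 ->
  (eta%:R ^+ 2)^-1 * opnorm (Mc *m invmx Mo *m Mc) <= 4^-1 * lambda_min Mo ->
  1 - eta%:R^-1 <= fidelity (P *m Ma0 Mo *m adjmx P) (P *m Ma1 eta Mo Mc *m adjmx P).
Proof.
move=> hn heta hP hMo Mou trMo hMc trMc hcond.
have hK := psd_sub_sandwich_scaled hn heta hMo Mou hMc hcond.
have -> : Ma1 eta Mo Mc = block_mx (2^-1 *: Mo) (eta%:R^-1 *: Mc)
    (eta%:R^-1 *: Mc) (2^-1 *: Mo) by rewrite /Ma1 (psd_herm hMc).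
have -> : 1 - eta%:R^-1 = \tr (2^-1 *: Mo) *+ 2 - \tr (eta%:R^-1 *: Mc).
  by rewrite !mxtraceZ trMo trMc mulr2n; field; rewrite pnatr_eq0 -lt0n.
apply: fidelity_block_ge => //; rewrite ?unitmxZ ?unitfE ?invr_eq0 ?pnatr_eq0 //.
- by apply: psdZ; rewrite ?invr_ge0 ?ler0n.
- by apply: psdZ; rewrite ?invr_ge0 ?ler0n.
Qed.

End Anamorphic.

Theorem theorem15 (C : numClosedFieldType) (d1 d2 : nat)
  (hd2 : (1 <= d2)%N) (hd : (d2 <= d1)%N)
  (Mo : 'M[C]_(2 ^ d1)) (Mc : 'M[C]_(2 ^ d2))
  (hMo : density Mo) (hMo_pd : posdef Mo) (hMc : density Mc)
  (k : d1.-tuple (bool * bool)) (k' : d2.-tuple (bool * bool))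
  (eta : nat) (heta : (0 < eta)%N)
  (s : 'S_(2 ^ d1 + 2 ^ d1)) (eps : C) (heps : 0 < eps) :
  let Mo' := conjmx (pauliU C k) Mo in
  let Mc' := conjmx (pauliU C k') Mc in
  let Mc'' := conjmx (Vmx C hd) Mc' in
  let Mf0 := conjmx (perm_mx s) (Ma0 Mo') in
  let Mf1 := conjmx (perm_mx s) (Ma1 eta Mo' Mc'') in
  eta%:R^-1 < eps ->
  (eta%:R ^+ 2)^-1 * opnorm (Mc'' *m invmx Mo' *m Mc'')
    <= 4^-1 * lambda_min Mo' ->
  1 - eta%:R^-1 <= fidelity Mf0 Mf1.
Proof.
move=> Mo' Mc' Mc'' Mf0 Mf1 _ hcond.
case: hMo => hMo trMo; case: hMc => hMc trMc.
have hU := pauliU_unitary C k; have hU' := pauliU_unitary C k'.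
have hV := Vmx_isometry C hd.
have hVm : partial_monomial (Vmx C hd) by apply: partial_monomial_Vmx.
have eMo' : Mo' = pauliU C k *m Mo *m adjmx (pauliU C k) by exact: conjmx_unitary.
have eMc'' : Mc'' =
    Vmx C hd *m (pauliU C k' *m Mc *m adjmx (pauliU C k')) *m adjmx (Vmx C hd).
  by rewrite /Mc'' /Mc' conjmx_isometry // conjmx_unitary.
rewrite /Mf0 /Mf1 !(conjmx_unitary _ (unitarymx_perm C s)).
apply: fidelity_Ma_ge => //.
- by rewrite expn_gt0.
- exact: unitarymx_perm.
- by rewrite eMo'; apply: psd_conj.
- have [Uu Uau] := mulmx1_unit (unitarymx_adjP _ hU).
  by rewrite eMo' !unitmx_mul Uu Uau posdef_unit.
- by rewrite eMo' mxtrace_isometry ?mul_adj_unitary.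
- by rewrite eMc''; apply/psd_conj/psd_conj.
- by rewrite eMc'' !mxtrace_isometry ?mul_adj_unitary.
Qed.
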